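(* Let $k\ge 2$ be a natural number. (i) Let $f(t)=t^k+at^{k-1}-b$ with $a,b\in\mathbb{Z}$ and $b\ne 0$. Then $f$ admits polysmoothness $\phi(k-1)/(k-1)$. (ii) Let $f(t)=at^k-t+b$ with $a,b\in\mathbb{Z}$ and $ab\ne 0$. Then $f$ admits polysmoothness $\phi(k)/k$.
   Context: $\phi$ denotes Euler's totient function. A polynomial $f\in\mathbb{Z}[t]$ of positive degree admits polysmoothness $\theta$ (for a real $\theta\ge 0$) if there exists a non-constant polynomial $g\in\mathbb{Z}[t]$ such that every irreducible factor of $f(g(t))$ has degree at most $\theta\,(\deg f)(\deg g)$. *)

From mathcomp Require Import all_boot all_order all_algebra.
Set Implicit Arguments. Unset Strict Implicit. Unset Printing Implicit Defensive.
Import Order.TTheory GRing.Theory Num.Theory.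
Local Open Scope ring_scope.

Definition irreducible_Zt (p : {poly int}) : Prop :=
  p != 0 /\ p \isn't a GRing.unit /\
  forall q r : {poly int}, p = q * r -> q \is a GRing.unit \/ r \is a GRing.unit.

(* f admits polysmoothness theta (theta a real >= 0; here rational suffices
   since the thetas in question are rational). *)
Definition admits_polysmoothness (f : {poly int}) (theta : rat) : Prop :=
  exists g : {poly int}, (1 < size g)%N /\
    forall p : {poly int}, irreducible_Zt p -> (exists q : {poly int}, f \Po g = p * q) ->
      ((size p).-1)%:R <= theta * ((size f).-1)%:R * ((size g).-1)%:R.

From mathcomp Require Import all_boot all_order all_algebra.
From mathcomp Require Import all_field zify ring.
Set Implicit Arguments. Unset Strict Implicit. Unset Printing Implicit Defensive.
Import Order.TTheory GRing.Theory Num.Theory.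
Local Open Scope ring_scope.

(* Compose with a g for which every complex root z of f(g(t)) yields a root of
   unity.  In (i), with m = k - 1 and g = b t^m - a, the equation
   f(w) = w^m (w + a) - b = 0 at w = g(z) gives (z g(z))^m = 1; in (ii), with
   g = a t^k + b, a g(z)^k - g(z) + b = a (g(z)^k - z^k) gives (g(z)/z)^k = 1.
   If that root of unity has order d | m (resp. d | k), z is a root of
   Phi_d(t g(t)) (resp. of t^phi(d) Phi_d(g(t)/t)), a nonzero integer polynomial
   of degree phi(d) (m + 1) (resp. at most phi(d) k), and phi(d) <= phi(m)
   (resp. phi(k)) because d divides it.  An irreducible factor of f(g(t))
   vanishing at z divides that polynomial over Q, so its degree is no larger. *)

Lemma dvdn_leq_totient d n : (0 < n)%N -> (d %| n)%N -> (totient d <= totient n)%N.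
Proof.
move=> n_gt0 dvd_dn; have d_gt0 := dvdn_gt0 n_gt0 dvd_dn.
pose F p := (p.-1 * p ^ (logn p n).-1)%N.
have F_gt0 p : p \in primes n -> (0 < F p)%N.
  by rewrite mem_primes => /and3P[/prime_gt1 p_gt1 _ _]; rewrite muln_gt0 expn_gt0; lia.
have primes_d : perm_eq (primes d) [seq p <- primes n | p \in primes d].
  apply: uniq_perm; rewrite ?filter_uniq ?primes_uniq // => p.
  rewrite mem_filter; case pd: (p \in primes d); rewrite ?andbT ?andbF //.
  by move: pd; rewrite !mem_primes n_gt0 => /and3P[-> _ /dvdn_trans->].
rewrite !totientE // [X in (_ <= X)%N](bigID (mem (primes d))) /=.
rewrite -[X in (_ <= X * _)%N]big_filter -(perm_big _ primes_d) /=.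
apply: leq_trans (leq_pmulr _ _); last first.
  by rewrite big_seq_cond prodn_cond_gt0 // => p /andP[/F_gt0].
rewrite big_seq [X in (_ <= X)%N]big_seq; apply: leq_prod => p.
rewrite mem_primes => /and3P[p_pr _ _].
rewrite leq_mul2l leq_pexp2l ?prime_gt0 //; have := dvdn_leq_log p n_gt0 dvd_dn; lia.
Qed.

Lemma irreducible_Zt_irreducible_poly (p : {poly int}) :
  irreducible_Zt p -> (1 < size p)%N -> irreducible_poly p.
Proof.
case=> p_neq0 [_ p_irr] p_gt1; split=> // q q_n1 q_dvd_p.
have [r Dp] := dvdpP_int q_dvd_p.
have q_neq0 : q != 0 by apply: contraNneq p_neq0 => q0; rewrite Dp q0 zprimitive0 mul0r.
case: (p_irr _ _ Dp) => [|r_unit]; first by rewrite poly_unitE size_zprimitive (negPf q_n1).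
have r_size1 : size r = 1%N by move: r_unit; rewrite poly_unitE => /andP[/eqP].
have size_pq : size p = size q.
  rewrite Dp size_mul ?zprimitive_eq0 ?size_zprimitive ?r_size1 ?addn1 //.
  by rewrite -size_poly_eq0 r_size1.
have : map_poly (intr : int -> rat) q %= map_poly intr p.
  by rewrite -dvdp_size_eqp ?dvdp_rat_int ?size_rat_int_poly ?size_pq.
by rewrite /eqp !dvdp_rat_int.
Qed.

Lemma ratr_map_intr_poly (p : {poly int}) :
  map_poly (ratr : rat -> algC) (map_poly intr p) = map_poly intr p.
Proof. by rewrite -map_poly_comp; apply: eq_map_poly => x /=; rewrite rmorph_int. Qed.

Lemma irreducible_size_leq_common_root (p D : {poly int}) (z : algC) :
  irreducible_poly p -> D != 0 ->
  root (map_poly intr p) z -> root (map_poly intr D) z -> (size p <= size D)%N.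
Proof.
move=> p_irr D_neq0 pz0 Dz0.
have /irredp_XsubCP pQ_irr := (irreducible_rat_int p).2 p_irr.
set pQ := map_poly (intr : int -> rat) p; set DQ := map_poly (intr : int -> rat) D.
have pQ_dvd_DQ : pQ %| DQ.
  case: (pQ_irr _ (dvdp_gcdl pQ DQ)) => [gcd1 | /eqp_dvdl <-]; last exact: dvdp_gcdr.
  have : coprimep pQ DQ by rewrite coprimep_def (eqp_size gcd1) size_poly1.
  rewrite -(coprimep_map (ratr : rat -> algC)) !ratr_map_intr_poly => /coprimep_root.
  by move=> /(_ z pz0); rewrite (rootP Dz0) eqxx.
rewrite -(size_rat_int_poly p) -(size_rat_int_poly D) dvdp_leq //.
by rewrite map_poly_eq0_id0 // intr_eq0 lead_coef_eq0.
Qed.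

Lemma admits_polysmoothness_by_roots (f g : {poly int}) (theta : rat) (B : nat) :
  (1 < size g)%N -> B%:R <= theta * ((size f).-1)%:R * ((size g).-1)%:R ->
  (forall z : algC, root (map_poly intr (f \Po g)) z ->
     exists D : {poly int}, [/\ D != 0, root (map_poly intr D) z & (size D <= B.+1)%N]) ->
  admits_polysmoothness f theta.
Proof.
move=> g_gt1 le_B_theta fg_roots; exists g; split=> // p p_irr [q fg_pq].
apply: le_trans le_B_theta; rewrite ler_nat.
have [p_gt1 | ] := ltnP 1 (size p); last by case: (size p) => [|[]].
have : size (map_poly (intr : int -> algC) p) != 1%N.
  by rewrite size_map_inj_poly ?gtn_eqF //; apply: intr_inj.
case/closed_rootP => z pz0.
have /fg_roots[D [D_neq0 Dz0 size_D]] : root (map_poly intr (f \Po g)) z.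
  by rewrite fg_pq rmorphM rootM /= pz0.
have p_irr' := irreducible_Zt_irreducible_poly p_irr p_gt1.
have := irreducible_size_leq_common_root p_irr' D_neq0 pz0 Dz0.
by move=> /leq_trans/(_ size_D); case: (size p).
Qed.

Lemma unity_root_Cyclotomic (m : nat) (zeta : algC) :
  (0 < m)%N -> zeta ^+ m = 1 ->
  exists2 d, (totient d <= totient m)%N & root (map_poly intr 'Phi_d) zeta.
Proof.
move=> m_gt0 /(prim_order_exists m_gt0)[d d_prim d_dvd_m].
exists d; first exact: dvdn_leq_totient.
by rewrite (Cintr_Cyclotomic d_prim) root_cyclotomic.
Qed.

Section HomogComp.
Variable R : comNzRingType.
Implicit Types P g : {poly R}.

(* [homog_comp P g] is t^n P(g(t) / t), where n = deg P. *)
Definition homog_comp P g : {poly R} :=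
  \sum_(i < size P) P`_i *: (g ^+ i * 'X^((size P).-1 - i)).

Lemma size_homog_comp_leq P g :
  (1 < size g)%N -> (size (homog_comp P g) <= (size P).-1 * (size g).-1 + 1)%N.
Proof.
move=> g_gt1; apply: (leq_trans (size_sum _ _ _)); apply/bigmax_leqP => i _.
apply: leq_trans (size_scale_leq _ _) _; apply: leq_trans (size_polyMleq _ _) _.
rewrite size_polyXn; have := size_poly_exp_leq g i; have := ltn_ord i; nia.
Qed.

Lemma horner0_homog_comp P g :
  (homog_comp P g).[0] = lead_coef P * g.[0] ^+ (size P).-1.
Proof.
rewrite /homog_comp lead_coefE; case sizeP: (size P) => [|n] /=.
  by rewrite big_ord0 horner0 nth_default ?sizeP // mul0r.
rewrite horner_sum big_ord_recr /= big1 ?add0r => [|i _].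
  by rewrite hornerZ subnn expr0 mulr1 horner_exp.
by rewrite hornerZ hornerM hornerXn expr0n subn_eq0 leqNgt ltn_ord !mulr0.
Qed.

Lemma horner_homog_comp P g z zeta :
  g.[z] = zeta * z -> (homog_comp P g).[z] = z ^+ (size P).-1 * P.[zeta].
Proof.
move=> gz; rewrite [P.[zeta]](horner_coef_wide _ (leqnn _)) mulr_sumr horner_sum.
apply: eq_bigr => i _; rewrite hornerZ hornerM horner_exp hornerXn gz exprMn.
rewrite -[in RHS](subnKC (_ : i <= (size P).-1)%N) ?exprD; last by have := ltn_ord i; lia.
ring.
Qed.

End HomogComp.

Lemma map_homog_comp (R S : comNzRingType) (f : {rmorphism R -> S}) (P g : {poly R}) :
  injective f -> map_poly f (homog_comp P g) = homog_comp (map_poly f P) (map_poly f g).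
Proof.
move=> f_inj; rewrite /homog_comp size_map_inj_poly ?rmorph0 // rmorph_sum.
apply: eq_bigr => i _.
by rewrite /= map_polyZ rmorphM rmorphXn /= map_polyXn coef_map.
Qed.

Section ShiftedTrinomial.
Variables (m : nat) (a b : int).
Hypotheses (m_gt0 : (0 < m)%N) (b_neq0 : b != 0).

Let f : {poly int} := 'X^(m.+1) + a%:P * 'X^m - b%:P.
Let g : {poly int} := b%:P * 'X^m - a%:P.

Let size_f : size f = m.+2.
Proof.
rewrite /f -addrA size_polyDl ?size_polyXn // (leq_ltn_trans (size_polyD _ _)) //.
rewrite gtn_max size_polyN size_polyC mul_polyC.
by rewrite (leq_ltn_trans (size_scale_leq _ _)) ?size_polyXn //; case: (b != 0); lia.
Qed.

Let size_g : size g = m.+1.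
Proof.
rewrite /g size_polyDl mul_polyC size_scale ?size_polyXn // size_polyN size_polyC.
by case: (a != 0); lia.
Qed.

Lemma shifted_trinomial_comp_root_unity (z : algC) :
  root (map_poly intr (f \Po g)) z -> (z * (map_poly intr g).[z]) ^+ m = 1.
Proof.
have gz : (map_poly intr g).[z] = b%:~R * z ^+ m - a%:~R.
  by rewrite rmorphB rmorphM /= !map_polyC map_polyXn /= !hornerE.
rewrite /root map_comp_poly horner_comp gz; set w := _ - a%:~R.
rewrite /f !rmorphB rmorphD rmorphM /= !map_polyC !map_polyXn !hornerE.
have -> : w ^+ m.+1 + a%:~R * w ^+ m - b%:~R = b%:~R * ((z * w) ^+ m - 1) :> algC.
  by rewrite exprS exprMn /w; ring.
by rewrite mulf_eq0 intr_eq0 (negPf b_neq0) subr_eq0 => /eqP.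
Qed.

Lemma shifted_trinomial_polysmoothness :
  admits_polysmoothness f ((totient m)%:R / m%:R).
Proof.
apply: (admits_polysmoothness_by_roots (g := g) (B := totient m * m.+1)).
- by rewrite size_g.
- by rewrite size_f size_g /= mulrAC divfK ?natrM // pnatr_eq0 -lt0n.
move=> z /shifted_trinomial_comp_root_unity/(unity_root_Cyclotomic m_gt0)[d le_dm Phi_z].
have size_gX : size (g * 'X) = m.+2 by rewrite size_mulX ?size_g // -size_poly_gt0 size_g.
exists ('Phi_d \Po (g * 'X)); split.
- by rewrite comp_poly_eq0 ?size_gX // monic_neq0 // Cyclotomic_monic.
- by rewrite /root map_comp_poly horner_comp rmorphM /= map_polyX hornerMX mulrC.
have size_D := size_comp_poly 'Phi_d (g * 'X); rewrite size_Cyclotomic size_gX /= in size_D.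
by rewrite (leq_trans (leqSpred _)) // size_D ltnS leq_mul2r le_dm orbT.
Qed.

End ShiftedTrinomial.

Section TwistedTrinomial.
Variables (k : nat) (a b : int).
Hypotheses (k_gt1 : (1 < k)%N) (a_neq0 : a != 0) (b_neq0 : b != 0).

Let f : {poly int} := a%:P * 'X^k - 'X + b%:P.
Let g : {poly int} := a%:P * 'X^k + b%:P.

Let size_aXk : size (a%:P * 'X^k) = k.+1.
Proof. by rewrite mul_polyC size_scale ?size_polyXn. Qed.

Let size_f : size f = k.+1.
Proof.
rewrite /f -addrA size_polyDl size_aXk // (leq_ltn_trans (size_polyD _ _)) //.
by rewrite size_polyN size_polyX size_polyC gtn_max; case: (b != 0); lia.
Qed.

Let size_g : size g = k.+1.
Proof. by rewrite /g size_polyDl size_aXk // size_polyC; case: (b != 0); lia. Qed.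

Lemma twisted_trinomial_comp_root_unity (z : algC) :
  root (map_poly intr (f \Po g)) z ->
  exists2 zeta : algC, zeta ^+ k = 1 & (map_poly intr g).[z] = zeta * z.
Proof.
have gz : (map_poly intr g).[z] = a%:~R * z ^+ k + b%:~R.
  by rewrite rmorphD rmorphM /= !map_polyC map_polyXn /= !hornerE.
rewrite /root map_comp_poly horner_comp gz; set w := _ + b%:~R.
rewrite /f rmorphD rmorphB rmorphM /= !map_polyC map_polyXn map_polyX !hornerE.
have -> : a%:~R * w ^+ k - w + b%:~R = a%:~R * (w ^+ k - z ^+ k) :> algC by rewrite /w; ring.
rewrite mulf_eq0 intr_eq0 (negPf a_neq0) subr_eq0 => /eqP wz.
have z_neq0 : z != 0.
  apply: contra_eq_neq wz => z0; rewrite /w z0 expr0n gtn_eqF 1?ltnW // mulr0 add0r.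
  by rewrite expf_neq0 // intr_eq0.
exists (w / z); last by rewrite divfK.
by rewrite expr_div_n wz divff // expf_neq0.
Qed.

Lemma twisted_trinomial_polysmoothness :
  admits_polysmoothness f ((totient k)%:R / k%:R).
Proof.
have k_gt0 : (0 < k)%N by apply: ltnW.
apply: (admits_polysmoothness_by_roots (g := g) (B := totient k * k)).
- by rewrite size_g.
- by rewrite size_f size_g /= divfK ?natrM // pnatr_eq0 -lt0n.
move=> z /twisted_trinomial_comp_root_unity[zeta].
move=> /(unity_root_Cyclotomic k_gt0)[d le_dk Phi_zeta] gz.
exists (homog_comp 'Phi_d g); split.
- apply: contra_neq b_neq0 => /(congr1 (horner^~ 0)).
  rewrite horner0_homog_comp horner0 (monicP (Cyclotomic_monic d)) mul1r.
  by rewrite /g !hornerE expr0n gtn_eqF // mulr0 add0r => /eqP; rewrite expf_eq0 => /andP[_ /eqP].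
- rewrite /root map_homog_comp; last exact: intr_inj.
  by rewrite (horner_homog_comp _ gz) (rootP Phi_zeta) mulr0.
apply: leq_trans (size_homog_comp_leq _ _) _; rewrite ?size_g // size_Cyclotomic /=.
by rewrite addn1 ltnS leq_mul2r le_dk orbT.
Qed.

End TwistedTrinomial.

Theorem theorem1p5 (k : nat) (hk : (2 <= k)%N) :
  (forall a b : int, b != 0 ->
     admits_polysmoothness ('X^k + a%:P * 'X^(k.-1) - b%:P)
       ((totient k.-1)%:R / (k.-1)%:R))
  /\
  (forall a b : int, a * b != 0 ->
     admits_polysmoothness (a%:P * 'X^k - 'X + b%:P)
       ((totient k)%:R / k%:R)).
Proof.
split=> a b.
  by case: k hk => [|m] // m_gt0 b_neq0; apply: shifted_trinomial_polysmoothness.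
rewrite mulf_eq0 negb_or => /andP[a_neq0 b_neq0].
exact: twisted_trinomial_polysmoothness.
Qed.
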